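(* Let $\mathbf{P}$ be a poset and let $\phi\in\mathcal{FO}(\forall,\exists,\wedge)$ be a sentence in reduced form. If there exists $p\in P$ such that $m\le^{\mathbf{P}}p\le^{\mathbf{P}}M$ for every minimal element $m$ of $\mathbf{P}$ and every maximal element $M$ of $\mathbf{P}$, then $\mathbf{P}\models\phi$.
   Context: $\mathcal{FO}(\forall,\exists,\wedge)$ denotes the class of first-order sentences over the vocabulary $\{\le\}$ built from atoms using only $\forall,\exists,\wedge$. All posets are finite with at least two elements. A sentence in alternating prefix form is $\phi=\forall x_1\exists y_1\ldots\forall x_l\exists y_l\,C$ with $l\ge0$, distinct variables, and $C$ a conjunction of atoms $u\le v$ over $\{x_1,y_1,\ldots,x_l,y_l\}$. It is represented by the prefix chain $\mathbf{Q}_\phi$ on $\{x_1,y_1,\ldots,x_l,y_l\}$ ordered $x_1<y_1<\cdots<x_l<y_l$ and the digraph $\mathbf{M}_\phi$ on the same set with an edge $(u,v)$ iff $u\le v$ is an atom of $C$. Let $M^\forall_\phi=\{x_1,\ldots,x_l\}$ and $M^\exists_\phi=\{y_1,\ldots,y_l\}$. $\phi$ is in reduced form if: (i) $\mathbf{M}_\phi$ is a poset; (ii) the elements of $M^\forall_\phi$ are pairwise incomparable in $\mathbf{M}_\phi$; (iii) for distinct $x,x'\in M^\forall_\phi$, their upsets in $\mathbf{M}_\phi$ are disjoint and their downsets in $\mathbf{M}_\phi$ are disjoint; (iv) for every $x\in M^\forall_\phi$ and every $y\in M^\exists_\phi$ comparable to $x$ in $\mathbf{M}_\phi$, $x$ precedes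 $y$ in $\mathbf{Q}_\phi$. *)

From HB Require Import structures.
From mathcomp Require Import all_boot all_order.
Set Implicit Arguments. Unset Strict Implicit. Unset Printing Implicit Defensive.
Import Order.Theory.
Local Open Scope order_scope.

(* A sentence in alternating prefix form
     forall x_1 exists y_1 ... forall x_l exists y_l C.
   Variables are encoded by natural numbers: x_i (i = 0..l-1) is 2*i and
   y_i is 2*i+1, so the prefix chain Q_phi is the usual order < on
   {0,..,2l-1}.  C is the list of atoms (u,v) meaning u <= v. *)
Record sentence := Sentence { nquant : nat ; atoms : seq (nat * nat) }.

Definition xvar (i : nat) : nat := i.*2.
Definition yvar (i : nat) : nat := i.*2.+1.
Definition is_var (phi : sentence) (u : nat) : bool := (u < (nquant phi).*2)%N.

Definition wf_sentence (phi : sentence) : Prop :=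
  forall u v, (u, v) \in atoms phi -> is_var phi u /\ is_var phi v.

Definition medge (phi : sentence) (u v : nat) : bool := (u, v) \in atoms phi.

Definition reduced_form (phi : sentence) : Prop :=
  let l := nquant phi in
  let E := medge phi in
  (* (i) M_phi is a poset on its vertex set *)
  ((forall u, is_var phi u -> E u u) /\
      (forall u v, E u v -> E v u -> u = v) /\
      (forall u v w, E u v -> E v w -> E u w)) /\
  (* (ii) universal variables pairwise incomparable *)
      (forall i j, (i < l)%N -> (j < l)%N -> i <> j ->
         ~~ E (xvar i) (xvar j)) /\
  (* (iii) disjoint upsets and disjoint downsets *)
      (forall i j, (i < l)%N -> (j < l)%N -> i <> j ->
         (forall v, ~ (E (xvar i) v /\ E (xvar j) v)) /\
         (forall u, ~ (E u (xvar i) /\ E u (xvar j)))) /\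
  (* (iv) comparable x_i, y_j : x_i precedes y_j in Q_phi *)
      (forall i j, (i < l)%N -> (j < l)%N ->
         (E (xvar i) (yvar j) || E (yvar j) (xvar i)) -> (xvar i < yvar j)%N).

Section Semantics.
Context {d : Order.disp_t} (T : finPOrderType d).

Definition upd (a : nat -> T) (j : nat) (t : T) : nat -> T :=
  fun i => if i == j then t else a i.

(* sat_from n k C a : the assignment a (already fixing x_0,y_0,...,x_(k-1),y_(k-1))
   satisfies  forall x_k exists y_k ... forall x_(k+n-1) exists y_(k+n-1) C. *)
Fixpoint sat_from (n k : nat) (C : seq (nat * nat)) (a : nat -> T) : Prop :=
  match n with
  | 0 => forall u v, (u, v) \in C -> a u <= a v
  | n'.+1 => forall x : T, exists y : T,
      sat_from n' k.+1 C (upd (upd a (xvar k) x) (yvar k) y)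
  end.

(* P |= phi.  The initial assignment is irrelevant for well-formed
   sentences (every variable is bound before the matrix is evaluated). *)
Definition models (phi : sentence) : Prop :=
  forall a0 : nat -> T, sat_from (nquant phi) 0 (atoms phi) a0.

Definition minimal (m : T) : Prop := forall x : T, x <= m -> x = m.
Definition maximal (M : T) : Prop := forall x : T, M <= x -> x = M.
End Semantics.

From HB Require Import structures.
From mathcomp Require Import all_boot all_order.
Import Order.Theory.
Local Open Scope order_scope.

(* Answer each existential [y_j] by a maximal element above the value of the
   universal [x_i] below it, by a minimal element below the value of the [x_i]
   above it, or by the middle element [p] when [y_j] is comparable to no
   universal variable.  Conditions (iii) and (iv) make this choice unique and
   computable from the values already fixed.  Atoms between an [x] and a [y]
   then hold by construction, an atom [x_i <= x_i'] forces [i = i'] by (ii),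
   and an atom [y_j <= y_j'] either makes both answers come from the same
   [x_i], or compares a minimal element or [p] with a maximal element or [p],
   which the hypothesis on [p] settles. *)

(* An upper bound of [x] with a largest possible down-set is maximal. *)
Lemma exists_maximal_ge d (T : finPOrderType d) (x : T) :
  exists2 M : T, x <= M & maximal M.
Proof.
have [M xM maxM] := arg_maxnP (fun M : T => #|[set z | z <= M]|) (lexx x).
exists M => // y My.
have sub : [set z | z <= M] \subset [set z | z <= y].
  by apply/subsetP => z; rewrite !inE => /le_trans; apply.
have := maxM y (le_trans xM My).
rewrite /= (geq_leqif (subset_leqif_card sub)) => /subsetP/(_ y).
rewrite !inE lexx => /(_ isT) yM.
by apply/le_anti; rewrite yM My.
Qed.

Lemma exists_minimal_le d (T : finPOrderType d) (x : T) :
  exists2 m : T, m <= x & minimal m.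
Proof. by have [m] := @exists_maximal_ge _ T^d x; exists m. Qed.

Lemma xvar_neq_yvar i j : xvar i <> yvar j.
Proof. by move/(congr1 odd); rewrite /xvar /yvar /= !odd_double. Qed.

Lemma var_cases u : u = xvar u./2 \/ u = yvar u./2.
Proof.
have e := odd_double_half u.
by case: (odd u) e => /= e; [right|left]; rewrite -{1}e.
Qed.

Lemma upd_eq {d} {T : finPOrderType d} (a : nat -> T) w t : upd a w t w = t.
Proof. by rewrite /upd eqxx. Qed.

Lemma upd_neq {d} {T : finPOrderType d} (a : nat -> T) w t u :
  u <> w -> upd a w t u = a u.
Proof. by rewrite /upd; case: eqP. Qed.

Section ReducedForm.
Context {phi : sentence}.
Hypotheses (phi_wf : wf_sentence phi) (phi_red : reduced_form phi).
Local Notation l := (nquant phi).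
Local Notation E := (medge phi).

Lemma medge_is_var [u v] : E u v -> is_var phi u /\ is_var phi v.
Proof. exact: phi_wf. Qed.

Lemma xvar_lt [i] : is_var phi (xvar i) -> (i < l)%N.
Proof. by rewrite /is_var ltn_double. Qed.

Lemma yvar_lt [j] : is_var phi (yvar j) -> (j < l)%N.
Proof. by rewrite /is_var ltn_Sdouble. Qed.

Lemma medge_trans [u v w] : E u v -> E v w -> E u w.
Proof. by case: phi_red => [[_ [_ Etrans]] _]; apply: Etrans. Qed.

Lemma medge_anti [u v] : E u v -> E v u -> u = v.
Proof. by case: phi_red => [[_ [Eanti _]] _]; apply: Eanti. Qed.

Lemma medge_xvar_eq [i i'] : E (xvar i) (xvar i') -> i = i'.
Proof.
move=> e; have [_ [incomp _]] := phi_red; have [ui ui'] := medge_is_var e.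
have [//|/eqP ne] := eqVneq i i'.
by move: (incomp i i' (xvar_lt ui) (xvar_lt ui') ne); rewrite e.
Qed.

Lemma medge_xvar_yvar_uniq [i i' j] :
  E (xvar i) (yvar j) -> E (xvar i') (yvar j) -> i = i'.
Proof.
move=> e e'; have [_ [_ [disj _]]] := phi_red.
have [[ui _] [ui' _]] := (medge_is_var e, medge_is_var e').
have [//|/eqP ne] := eqVneq i i'.
by case: (disj i i' (xvar_lt ui) (xvar_lt ui') ne) => up _; case: (up (yvar j)).
Qed.

Lemma medge_yvar_xvar_uniq [i i' j] :
  E (yvar j) (xvar i) -> E (yvar j) (xvar i') -> i = i'.
Proof.
move=> e e'; have [_ [_ [disj _]]] := phi_red.
have [[_ ui] [_ ui']] := (medge_is_var e, medge_is_var e').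
have [//|/eqP ne] := eqVneq i i'.
by case: (disj i i' (xvar_lt ui) (xvar_lt ui') ne) => _ down; case: (down (yvar j)).
Qed.

Lemma medge_xvar_yvar_xvar [i i' j] :
  E (xvar i) (yvar j) -> E (yvar j) (xvar i') -> False.
Proof.
move=> e e'; have ii' := medge_xvar_eq (medge_trans e e'); subst i'.
exact: xvar_neq_yvar (medge_anti e e').
Qed.

Lemma medge_xvar_yvar_leq [i j] :
  E (xvar i) (yvar j) || E (yvar j) (xvar i) -> (i <= j)%N.
Proof.
move=> e; have [_ [_ [_ prec]]] := phi_red.
have [il jl] : (i < l)%N /\ (j < l)%N.
  by case/orP: e => e; have [ui vi] := medge_is_var e;
    split; [exact: xvar_lt ui|exact: yvar_lt vi|exact: xvar_lt vi|exact: yvar_lt ui].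
by move: (prec i j il jl e); rewrite /xvar /yvar ltnS leq_double.
Qed.

Section SkolemStrategy.
Context {d : Order.disp_t} {T : finPOrderType d} {up down : T -> T} {p : T}.
Hypotheses (up_ge : forall x, x <= up x) (down_le : forall x, down x <= x).
Hypotheses (down_le_p : forall x, down x <= p) (p_le_up : forall x, p <= up x).

(* By (iii) at most one [x_i] lies below [y_j] and at most one above it, and by
   (iv) it is quantified before [y_j], so only earlier values of [a] are read. *)
Definition skolem (a : nat -> T) (j : nat) : T :=
  if [pick i : 'I_l | E (xvar i) (yvar j)] is Some i then up (a (xvar i))
  else if [pick i : 'I_l | E (yvar j) (xvar i)] is Some i then down (a (xvar i))
  else p.

Lemma skolem_up a [i j] : E (xvar i) (yvar j) -> skolem a j = up (a (xvar i)).
Proof.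
move=> e; rewrite /skolem; case: pickP => [i' /= e'|].
  by rewrite (medge_xvar_yvar_uniq e' e).
by move/(_ (Ordinal (xvar_lt (medge_is_var e).1))); rewrite /= e.
Qed.

Lemma skolem_down a [i j] : E (yvar j) (xvar i) -> skolem a j = down (a (xvar i)).
Proof.
move=> e; rewrite /skolem; case: pickP => [i' /= e'|_].
  by case: (medge_xvar_yvar_xvar e' e).
case: pickP => [i' /= e'|].
  by rewrite (medge_yvar_xvar_uniq e' e).
by move/(_ (Ordinal (xvar_lt (medge_is_var e).2))); rewrite /= e.
Qed.

Lemma skolem_le_p a j :
  (forall i : 'I_l, ~~ E (xvar i) (yvar j)) -> skolem a j <= p.
Proof.
move=> nox; rewrite /skolem; case: pickP => [i /=|_].
  by rewrite (negbTE (nox i)).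
by case: pickP => [i _|_]; rewrite ?down_le_p ?lexx.
Qed.

Lemma p_le_skolem a j :
  (forall i : 'I_l, ~~ E (yvar j) (xvar i)) -> p <= skolem a j.
Proof.
move=> noy; rewrite /skolem; case: pickP => [i _|_]; first exact: p_le_up.
by case: pickP => [i /=|_]; rewrite ?(negbTE (noy i)) ?lexx.
Qed.

Lemma skolem_le a j j' : E (yvar j) (yvar j') -> skolem a j <= skolem a j'.
Proof.
move=> e.
case: (pickP [pred i : 'I_l | E (xvar i) (yvar j)]) => [i /= ei|nox].
  by rewrite (skolem_up a ei) (skolem_up a (medge_trans ei e)).
case: (pickP [pred i : 'I_l | E (yvar j') (xvar i)]) => [i /= ei|noy].
  by rewrite (skolem_down a ei) (skolem_down a (medge_trans e ei)).
apply: (@le_trans _ _ p).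
  by apply: skolem_le_p => i; apply/negbT/nox.
by apply: p_le_skolem => i; apply/negbT/noy.
Qed.

Lemma eq_skolem a b j :
  (forall i, (i <= j)%N -> a (xvar i) = b (xvar i)) -> skolem a j = skolem b j.
Proof.
move=> ab; rewrite /skolem; case: pickP => [i /= e|_].
  by rewrite ab // medge_xvar_yvar_leq ?e.
case: pickP => [i /= e|_] //.
by rewrite ab // medge_xvar_yvar_leq ?e ?orbT.
Qed.

Lemma skolem_sat_atoms a :
  (forall j, (j < l)%N -> a (yvar j) = skolem a j) ->
  forall u v, (u, v) \in atoms phi -> a u <= a v.
Proof.
move=> ay u v e; have {}e : E u v := e; have [uv vv] := medge_is_var e.
case: (var_cases u) uv e => -> uv; case: (var_cases v) vv => -> vv e.
- by rewrite (medge_xvar_eq e).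
- by rewrite (ay _ (yvar_lt vv)) (skolem_up a e).
- by rewrite (ay _ (yvar_lt uv)) (skolem_down a e).
- by rewrite (ay _ (yvar_lt uv)) (ay _ (yvar_lt vv)) skolem_le.
Qed.

Lemma skolem_sat_from n k a :
  (n + k = l)%N -> (forall j, (j < k)%N -> a (yvar j) = skolem a j) ->
  sat_from n k (atoms phi) a.
Proof.
elim: n k a => [|n IH] k a nk ay /=.
  by apply: skolem_sat_atoms => j; rewrite -nk; apply: ay.
move=> x; set a1 := upd a (xvar k) x; set y := skolem a1 k.
exists y; apply: IH; first by rewrite addnS.
move=> j; rewrite ltnS leq_eqVlt => /predU1P[->|jk].
  rewrite upd_eq; apply: eq_skolem => i _.
  by rewrite upd_neq //; apply: xvar_neq_yvar.
rewrite upd_neq; last first.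
  by move=> /succn_inj/(can_inj doubleK) jk'; rewrite jk' ltnn in jk.
rewrite /a1 upd_neq; last by move/esym; apply: xvar_neq_yvar.
rewrite ay //; apply: eq_skolem => i ij.
rewrite !upd_neq //; last exact: xvar_neq_yvar.
by move=> /(can_inj doubleK) ik; rewrite -ik ltnNge ij in jk.
Qed.

Lemma skolem_models : models T phi.
Proof. by move=> a0; apply: skolem_sat_from; rewrite ?addn0. Qed.

End SkolemStrategy.
End ReducedForm.

Theorem proposition2 (d : Order.disp_t) (T : finPOrderType d)
  (phi : sentence) :
  (1 < #|T|)%N ->
  wf_sentence phi ->
  reduced_form phi ->
  (exists p : T, forall m M : T, minimal m -> maximal M -> m <= p /\ p <= M) ->
  models T phi.
Proof.
move=> _ phi_wf phi_red [p between].
have [up up_ge up_max] := fin_all_exists2 (@exists_maximal_ge d T).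
have [down down_le down_min] := fin_all_exists2 (@exists_minimal_le d T).
apply: (skolem_models (p := p) phi_wf phi_red up_ge down_le) => x.
- by have [] := between (down x) (up p) (down_min x) (up_max p).
- by have [] := between (down p) (up x) (down_min p) (up_max x).
Qed.
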